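(* Let $\mathcal{H}$ be a Hilbert superspace of parity $n\in\mathbb{Z}_2$, and let $J_1,J_2$ be two fundamental symmetries for $\mathcal{H}$. Then the Hilbert-space topologies on $\mathcal{H}$ defined by the positive definite scalar products $(x,y)_{J_1}=\langle x,J_1(y)\rangle$ and $(x,y)_{J_2}=\langle x,J_2(y)\rangle$ coincide. Consequently, the algebra $\mathcal{B}(\mathcal{H})$ of continuous endomorphisms of $\mathcal{H}$ does not depend on the choice of fundamental symmetry.
   Context: A complex $\mathbb{Z}_2$-graded vector space is $\mathcal{H}=\mathcal{H}_0\oplus\mathcal{H}_1$; $|x|\in\mathbb{Z}_2$ denotes the degree of a homogeneous element $x$. A sesquilinear form $\langle-,-\rangle$ (antilinear in the first variable) is superhermitian if $\overline{\langle x,y\rangle}=(-1)^{|x||y|}\langle y,x\rangle$ for homogeneous $x,y$. It is homogeneous of degree $n$ if $\langle x,y\rangle=0$ whenever $|x|+|y|\neq n$. A Hilbert superspace of parity $n\in\mathbb{Z}_2$ is a complex $\mathbb{Z}_2$-graded vector space $\mathcal{H}$ with a superhermitian sesquilinear inner product $\langle-,-\rangle$, homogeneous of degree $n$, for which there exists a fundamental symmetry. A fundamental symmetry is an endomorphism $J$ of $\mathcal{H}$, homogeneous of degree $n$, with the following properties for all homogeneous $x,y$: - $J^2(x)=(-1)^{(n+1)|x|}x$; - $\langle J(x),J(y)\rangle=\langle x,y\rangle$; - $(x,y)_J:=\langle x,J(y)\rangle$ is a hermitian positive definite scalar product for which $\mathcal{H}$ is complete. *)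

From Stdlib Require Export Reals.
Open Scope R_scope.

Record Cx := mkC { Re : R; Im : R }.
Definition C0 : Cx := mkC 0 0.
Definition C1 : Cx := mkC 1 0.
Definition Cadd (a b : Cx) : Cx := mkC (Re a + Re b) (Im a + Im b).
Definition Copp (a : Cx) : Cx := mkC (- Re a) (- Im a).
Definition Cmul (a b : Cx) : Cx :=
  mkC (Re a * Re b - Im a * Im b) (Re a * Im b + Im a * Re b).
Definition Cconj (a : Cx) : Cx := mkC (Re a) (- Im a).

Record CVS := {
  vcar :> Type;
  vadd : vcar -> vcar -> vcar;
  vzero : vcar;
  vopp : vcar -> vcar;
  vscal : Cx -> vcar -> vcar;
  vaddA : forall x y z, vadd x (vadd y z) = vadd (vadd x y) z;
  vaddC : forall x y, vadd x y = vadd y x;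
  vadd0 : forall x, vadd x vzero = x;
  vaddN : forall x, vadd x (vopp x) = vzero;
  vscal1 : forall x, vscal C1 x = x;
  vscalA : forall a b x, vscal a (vscal b x) = vscal (Cmul a b) x;
  vscalDv : forall a x y, vscal a (vadd x y) = vadd (vscal a x) (vscal a y);
  vscalDc : forall a b x, vscal (Cadd a b) x = vadd (vscal a x) (vscal b x)
}.

Arguments vadd {_}. Arguments vzero {_}. Arguments vopp {_}. Arguments vscal {_}.

(* ---------- Z2-graded complex vector spaces: H = H_0 (+) H_1 ----------
   Degrees in Z2 are represented by bool (false = 0, true = 1, addition = xorb).
   [homog d x] means x lies in H_d. *)
Record GradedCVS := {
  gvs :> CVS;
  homog : bool -> gvs -> Prop;
  homog0 : forall d, homog d vzero;
  homogD : forall d x y, homog d x -> homog d y -> homog d (vadd x y);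
  homogZ : forall d a x, homog d x -> homog d (vscal a x);
  homog_decomp : forall x, exists x0 x1,
      homog false x0 /\ homog true x1 /\ x = vadd x0 x1;
  homog_disj : forall x, homog false x -> homog true x -> x = vzero
}.

Arguments homog {_}.

Section Defs.
Variable H : GradedCVS.

Definition is_linear (T : H -> H) : Prop :=
  (forall x y, T (vadd x y) = vadd (T x) (T y)) /\
  (forall a x, T (vscal a x) = vscal a (T x)).

Definition is_sesquilinear (form : H -> H -> Cx) : Prop :=
  (forall x y z, form (vadd x y) z = Cadd (form x z) (form y z)) /\
  (forall a x z, form (vscal a x) z = Cmul (Cconj a) (form x z)) /\
  (forall x y z, form x (vadd y z) = Cadd (form x y) (form x z)) /\
  (forall a x y, form x (vscal a y) = Cmul a (form x y)).

(* (-1)^(a*b) *)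
Definition zsign (b : bool) : Cx := if b then Copp C1 else C1.

Definition is_superhermitian (form : H -> H -> Cx) : Prop :=
  forall a b x y, homog a x -> homog b y ->
    Cconj (form x y) = Cmul (zsign (andb a b)) (form y x).

Definition form_homogeneous_of_degree (n : bool) (form : H -> H -> Cx) : Prop :=
  forall a b x y, homog a x -> homog b y -> xorb a b <> n -> form x y = C0.

Definition normJ (form : H -> H -> Cx) (J : H -> H) (x : H) : R :=
  sqrt (Re (form x (J x))).
Definition distJ (form : H -> H -> Cx) (J : H -> H) (x y : H) : R :=
  normJ form J (vadd x (vopp y)).

Definition completeJ (form : H -> H -> Cx) (J : H -> H) : Prop :=
  forall u : nat -> H,
    (forall eps, 0 < eps -> exists N, forall p q, (N <= p)%nat -> (N <= q)%nat ->
        distJ form J (u p) (u q) < eps) ->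
    exists l : H, forall eps, 0 < eps -> exists N, forall p, (N <= p)%nat ->
        distJ form J (u p) l < eps.

Definition is_fundamental_symmetry (n : bool) (form : H -> H -> Cx) (J : H -> H)
  : Prop :=
  is_linear J /\
  (forall a x, homog a x -> homog (xorb a n) (J x)) /\
  (* J^2 x = (-1)^((n+1)|x|) x *)
  (forall a x, homog a x ->
     J (J x) = if andb (negb n) a then vopp x else x) /\
  (forall a b x y, homog a x -> homog b y -> form (J x) (J y) = form x y) /\
  (forall x y, Cconj (form x (J y)) = form y (J x)) /\
  (forall x, x <> vzero -> 0 < Re (form x (J x))) /\
  completeJ form J.

Definition is_Hilbert_superspace (n : bool) (form : H -> H -> Cx) : Prop :=
  is_sesquilinear form /\ is_superhermitian form /\
  form_homogeneous_of_degree n form /\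
  exists J, is_fundamental_symmetry n form J.

Definition is_openJ (form : H -> H -> Cx) (J : H -> H) (U : H -> Prop) : Prop :=
  forall x, U x -> exists eps, 0 < eps /\
    forall y, distJ form J y x < eps -> U y.

Definition continuousJ (form : H -> H -> Cx) (J : H -> H) (T : H -> H) : Prop :=
  forall x eps, 0 < eps -> exists delta, 0 < delta /\
    forall y, distJ form J y x < delta -> distJ form J (T y) (T x) < eps.

End Defs.

From Stdlib Require Import Reals Lra Lia Classical ClassicalEpsilon.
Open Scope R_scope.

(* The [J2]-norm is the pointwise supremum of the functionals
   [y |-> Re (y, x')_J2] over [J2]-unit vectors [x'].  Each of them is [J1]-continuous, because
   [(y, x')_J2 = <y, J2 x'> = (y, w)_J1] for the [w] with [J1 w = J2 x'] ([J1] is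
   onto since [J1^2 = +-1] on homogeneous vectors).  Hence the [J2]-norm is a
   lower semicontinuous seminorm on the Banach space [(H, (-,-)_J1)], and by the
   Baire category argument behind the uniform boundedness principle it is
   dominated by a multiple of the [J1]-norm.  By symmetry the two norms are
   equivalent, so they have the same open sets and the same continuous maps. *)

Section VectorSpace.
Variable V : CVS.
Implicit Types a b c x y : V.

Lemma vadd0l x : vadd vzero x = x.
Proof. rewrite vaddC. apply vadd0. Qed.

Lemma vaddI a b c : vadd a b = vadd a c -> b = c.
Proof.
  intros E.
  rewrite <- (vadd0l b), <- (vadd0l c), <- (vaddN V a), !(vaddC V a (vopp a)), <- !vaddA, E.
  reflexivity.
Qed.

Lemma vopp_unique a b : vadd a b = vzero -> b = vopp a.
Proof. intros E. apply (vaddI a). rewrite vaddN. exact E. Qed.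

Lemma voppK a : vopp (vopp a) = a.
Proof. symmetry. apply vopp_unique. rewrite vaddC. apply vaddN. Qed.

Lemma voppD a b : vopp (vadd a b) = vadd (vopp a) (vopp b).
Proof.
  symmetry. apply vopp_unique.
  rewrite <- vaddA, (vaddC V (vopp a) (vopp b)), (vaddA V b (vopp b)), vaddN, vadd0l.
  apply vaddN.
Qed.

Lemma vsub_opp a b : vadd a (vopp b) = vopp (vadd b (vopp a)).
Proof. rewrite voppD, voppK, vaddC. reflexivity. Qed.

Lemma vsub_split a b c : vadd a (vopp b) = vadd (vadd a (vopp c)) (vadd c (vopp b)).
Proof.
  rewrite <- vaddA, (vaddA V (vopp c) c), (vaddC V (vopp c) c), vaddN, vadd0l.
  reflexivity.
Qed.

Lemma vaddKl a b : vadd (vadd a b) (vopp a) = b.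
Proof. rewrite (vaddC V a b), <- vaddA, vaddN. apply vadd0. Qed.

Lemma vsubKl a b : vadd a (vadd b (vopp a)) = b.
Proof. rewrite vaddA, (vaddC V a b), <- vaddA, vaddN. apply vadd0. Qed.

Lemma vscal0 x : vscal (mkC 0 0) x = vzero.
Proof.
  apply (vaddI (vscal (mkC 0 0) x)). rewrite vadd0, <- vscalDc.
  unfold Cadd; simpl. rewrite Rplus_0_r. reflexivity.
Qed.

End VectorSpace.

Definition rscale {V : CVS} (t : R) (x : V) : V := vscal (mkC t 0) x.

Definition is_seminorm {V : CVS} (nrm : V -> R) : Prop :=
  (forall x, 0 <= nrm x) /\
  (forall x y, nrm (vadd x y) <= nrm x + nrm y) /\
  (forall x, nrm (vopp x) = nrm x) /\
  (forall t x, 0 <= t -> nrm (rscale t x) = t * nrm x).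

Definition complete_for {V : CVS} (nrm : V -> R) : Prop :=
  forall u : nat -> V,
    (forall eps, 0 < eps -> exists M, forall p q, (M <= p)%nat -> (M <= q)%nat ->
        nrm (vadd (u p) (vopp (u q))) < eps) ->
    exists l : V, forall eps, 0 < eps -> exists M, forall p, (M <= p)%nat ->
        nrm (vadd (u p) (vopp l)) < eps.

Definition lower_semicontinuous {V : CVS} (nrm f : V -> R) : Prop :=
  forall x k, k < f x -> exists r, 0 < r /\
    forall y, nrm (vadd y (vopp x)) < r -> k < f y.

Definition open_for {V : CVS} (nrm : V -> R) (U : V -> Prop) : Prop :=
  forall x, U x -> exists eps, 0 < eps /\ forall y, nrm (vadd y (vopp x)) < eps -> U y.

Definition continuous_for {V : CVS} (nrm : V -> R) (T : V -> V) : Prop :=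
  forall x eps, 0 < eps -> exists delta, 0 < delta /\
    forall y, nrm (vadd y (vopp x)) < delta -> nrm (vadd (T y) (vopp (T x))) < eps.

Section Seminorm.
Variables (V : CVS) (nrm : V -> R).
Hypothesis nrm_semi : is_seminorm nrm.

Lemma seminorm_ge0 x : 0 <= nrm x.
Proof. apply nrm_semi. Qed.

Lemma seminormD x y : nrm (vadd x y) <= nrm x + nrm y.
Proof. apply nrm_semi. Qed.

Lemma seminormN x : nrm (vopp x) = nrm x.
Proof. apply nrm_semi. Qed.

Lemma seminormZ t x : 0 <= t -> nrm (rscale t x) = t * nrm x.
Proof. apply nrm_semi. Qed.

Lemma seminorm0 : nrm vzero = 0.
Proof.
  rewrite <- (vscal0 V vzero). fold (rscale 0 (@vzero V)).
  rewrite seminormZ by lra. ring.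
Qed.

Lemma seminorm_dist_sym a b : nrm (vadd a (vopp b)) = nrm (vadd b (vopp a)).
Proof. rewrite vsub_opp. apply seminormN. Qed.

Lemma seminorm_dist_triangle a b c :
  nrm (vadd a (vopp b)) <= nrm (vadd a (vopp c)) + nrm (vadd c (vopp b)).
Proof. rewrite (vsub_split V a b c). apply seminormD. Qed.

End Seminorm.

Lemma quadratic_ge0_discriminant (a b c : R) : 0 <= a -> 0 <= c ->
  (forall t, 0 <= a + 2 * t * b + t * t * c) -> b * b <= a * c.
Proof.
  intros ha hc h. destruct (Req_dec c 0) as [c0|cn].
  - subst c. destruct (Req_dec b 0) as [->|bn]; [lra|].
    specialize (h (- (a + 1) / (2 * b))).
    replace (a + 2 * (- (a + 1) / (2 * b)) * b + - (a + 1) / (2 * b) * (- (a + 1) / (2 * b)) * 0)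
      with (-1) in h by (field; exact bn).
    lra.
  - specialize (h (- b / c)).
    replace (a + 2 * (- b / c) * b + - b / c * (- b / c) * c) with ((a * c - b * b) / c) in h
      by (field; exact cn).
    assert (0 <= (a * c - b * b) / c * c) by (apply Rmult_le_pos; lra).
    replace ((a * c - b * b) / c * c) with (a * c - b * b) in * by (field; exact cn).
    lra.
Qed.

Section InnerSeminorm.
Variables (V : CVS) (g : V -> V -> R).
Hypothesis g_addl : forall x y z, g (vadd x y) z = g x z + g y z.
Hypothesis g_scalel : forall t x z, g (rscale t x) z = t * g x z.
Hypothesis g_sym : forall x y, g x y = g y x.
Hypothesis g_ge0 : forall x, 0 <= g x x.

Definition inner_seminorm (x : V) : R := sqrt (g x x).

Lemma g_addr x y z : g x (vadd y z) = g x y + g x z.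
Proof. rewrite !(g_sym x), g_addl. reflexivity. Qed.

Lemma g_scaler t x z : g x (rscale t z) = t * g x z.
Proof. rewrite !(g_sym x). apply g_scalel. Qed.

Lemma g_oppl x z : g (vopp x) z = - g x z.
Proof.
  assert (g0 : g vzero z = 0).
  { pose proof (g_addl vzero vzero z) as h. rewrite vadd0 in h. lra. }
  pose proof (g_addl x (vopp x) z) as h. rewrite vaddN, g0 in h. lra.
Qed.

Lemma inner_seminorm_sq x : inner_seminorm x * inner_seminorm x = g x x.
Proof. apply sqrt_sqrt, g_ge0. Qed.

Lemma inner_seminorm_ge0 x : 0 <= inner_seminorm x.
Proof. apply sqrt_pos. Qed.

Lemma inner_Cauchy_Schwarz x y : g x y <= inner_seminorm x * inner_seminorm y.
Proof.
  assert (q : g x y * g x y <= g x x * g y y).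
  { apply quadratic_ge0_discriminant; try apply g_ge0.
    intros t. pose proof (g_ge0 (vadd x (rscale t y))) as h.
    rewrite g_addl, !g_addr, !g_scalel, !g_scaler, (g_sym y x) in h. lra. }
  rewrite <- !inner_seminorm_sq in q.
  pose proof (inner_seminorm_ge0 x). pose proof (inner_seminorm_ge0 y).
  assert (0 <= inner_seminorm x * inner_seminorm y) by (apply Rmult_le_pos; assumption).
  nra.
Qed.

Lemma inner_seminorm_is_seminorm : is_seminorm inner_seminorm.
Proof.
  split; [exact inner_seminorm_ge0|]. split; [|split].
  - intros x y.
    pose proof (inner_seminorm_sq (vadd x y)) as e.
    rewrite g_addl, !g_addr, (g_sym y x), <- !inner_seminorm_sq in e.
    pose proof (inner_Cauchy_Schwarz x y).
    pose proof (inner_seminorm_ge0 x). pose proof (inner_seminorm_ge0 y).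
    pose proof (inner_seminorm_ge0 (vadd x y)).
    nra.
  - intros x. unfold inner_seminorm. rewrite g_oppl, g_sym, g_oppl, Ropp_involutive.
    reflexivity.
  - intros t x ht. unfold inner_seminorm.
    rewrite g_scalel, g_scaler, <- Rmult_assoc, sqrt_mult_alt, sqrt_square by nra.
    reflexivity.
Qed.

Lemma inner_seminorm_lsc (nrm : V -> R) : is_seminorm nrm ->
  (forall x, exists C, forall y, g y x <= C * nrm y) ->
  lower_semicontinuous nrm inner_seminorm.
Proof.
  intros hnrm hbd x k hk.
  destruct (Rlt_or_le k 0) as [kneg|kpos].
  { exists 1. split; [lra|]. intros y _. pose proof (inner_seminorm_ge0 y). lra. }
  set (a := inner_seminorm x) in *.
  destruct (hbd x) as [C hC].
  set (D := Rabs C + 1).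
  assert (hD : 0 < D) by (pose proof (Rabs_pos C); unfold D; lra).
  exists (a * (a - k) / D). split; [apply Rdiv_lt_0_compat; nra|].
  intros y hy.
  set (d := vadd y (vopp x)) in *.
  assert (lower : - (D * nrm d) <= g d x).
  { pose proof (hC (vopp d)) as h. rewrite g_oppl, (seminormN V nrm hnrm) in h.
    pose proof (Rle_abs C). pose proof (seminorm_ge0 V nrm hnrm d). unfold D. nra. }
  assert (small : D * nrm d < a * (a - k)).
  { replace (a * (a - k)) with (D * (a * (a - k) / D)) by (field; lra).
    apply Rmult_lt_compat_l; assumption. }
  assert (split_y : g y x = a * a + g d x).
  { unfold d. rewrite <- (vsubKl V x y) at 1. rewrite g_addl, <- inner_seminorm_sq. reflexivity. }
  pose proof (inner_Cauchy_Schwarz y x) as cs. fold a in cs.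
  pose proof (inner_seminorm_ge0 y).
  nra.
Qed.

End InnerSeminorm.

Section LscSeminormBounded.
Variables (V : CVS) (N1 N2 : V -> R).
Hypotheses (N1_semi : is_seminorm N1) (N2_semi : is_seminorm N2).
Hypothesis N1_complete : complete_for N1.
Hypothesis N2_lsc : lower_semicontinuous N1 N2.

Lemma nested_balls_meet (c : nat -> V) (r : nat -> R) :
  (forall m, 0 <= r m) ->
  (forall m, N1 (vadd (c (S m)) (vopp (c m))) + r (S m) <= r m) ->
  (forall eps, 0 < eps -> exists m, r m < eps) ->
  exists l, forall m, N1 (vadd l (vopp (c m))) <= r m.
Proof.
  intros r_ge0 nested r_small.
  assert (tele : forall q p, N1 (vadd (c (p + q)%nat) (vopp (c q))) + r (p + q)%nat <= r q).
  { intros q p. induction p as [|p IH].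
    - simpl. rewrite vaddN, (seminorm0 V N1 N1_semi). lra.
    - pose proof (seminorm_dist_triangle V N1 N1_semi (c (S p + q)%nat) (c q) (c (p + q)%nat)).
      pose proof (nested (p + q)%nat). simpl in *. lra. }
  assert (far : forall M p, (M <= p)%nat -> N1 (vadd (c p) (vopp (c M))) <= r M).
  { intros M p hp. replace p with ((p - M) + M)%nat by lia.
    pose proof (tele M (p - M)%nat). pose proof (r_ge0 ((p - M) + M)%nat). lra. }
  destruct (N1_complete c) as [l hl].
  { intros eps heps. destruct (r_small (eps / 2)) as [M hM]; [lra|]. exists M. intros p q hp hq.
    pose proof (far M p hp). pose proof (far M q hq).
    pose proof (seminorm_dist_triangle V N1 N1_semi (c p) (c q) (c M)).
    rewrite (seminorm_dist_sym V N1 N1_semi (c M) (c q)) in *.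
    lra. }
  exists l. intros m. apply Rle_plus_epsilon. intros eps heps.
  destruct (hl eps heps) as [M hM].
  pose proof (hM (M + m)%nat ltac:(lia)).
  pose proof (seminorm_dist_triangle V N1 N1_semi l (c m) (c (M + m)%nat)).
  rewrite (seminorm_dist_sym V N1 N1_semi l (c (M + m)%nat)) in *.
  pose proof (tele m M). pose proof (r_ge0 (M + m)%nat).
  lra.
Qed.

Lemma unbounded_in_every_ball :
  (forall M, exists x, M * N1 x < N2 x) ->
  forall c r k, 0 < r -> exists y, N1 (vadd y (vopp c)) < r /\ k < N2 y.
Proof.
  intros unb c r k hr.
  set (K := Rabs k + N2 c + 1).
  assert (hK : 0 < K).
  { pose proof (Rabs_pos k). pose proof (seminorm_ge0 V N2 N2_semi c). unfold K. lra. }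
  destruct (unb (K / r)) as [x hx].
  assert (hN2x : 0 < N2 x).
  { pose proof (seminorm_ge0 V N1 N1_semi x).
    assert (0 <= K / r * N1 x) by (apply Rmult_le_pos; [apply Rlt_le, Rdiv_lt_0_compat|]; assumption).
    lra. }
  set (t := K / N2 x).
  assert (ht : 0 < t) by (apply Rdiv_lt_0_compat; assumption).
  exists (vadd c (rscale t x)). rewrite vaddKl. split.
  - rewrite (seminormZ V N1 N1_semi) by lra.
    assert (K * N1 x < r * N2 x).
    { replace (K * N1 x) with (r * (K / r * N1 x)) by (field; lra).
      apply Rmult_lt_compat_l; assumption. }
    unfold t. apply (Rmult_lt_reg_l (N2 x)); [assumption|].
    replace (N2 x * (K / N2 x * N1 x)) with (K * N1 x) by (field; lra). lra.
  - pose proof (seminormD V N2 N2_semi (vadd c (rscale t x)) (vopp c)) as tri.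
    rewrite vaddKl, (seminormN V N2 N2_semi), (seminormZ V N2 N2_semi) in tri by lra.
    replace (t * N2 x) with K in tri by (unfold t; field; lra).
    pose proof (Rle_abs k). unfold K in tri. lra.
Qed.

Definition nested_ball_step (k : nat) (p q : V * R) : Prop :=
  0 < snd q /\ snd q <= / INR (S k) /\
  N1 (vadd (fst q) (vopp (fst p))) + snd q <= snd p /\
  forall z, N1 (vadd z (vopp (fst q))) <= snd q -> INR k < N2 z.

Lemma nested_ball_step_exists :
  (forall M, exists x, M * N1 x < N2 x) ->
  forall k p, 0 < snd p -> exists q, nested_ball_step k p q.
Proof.
  intros unb k [c r] hr. simpl in hr.
  destruct (unbounded_in_every_ball unb c r (INR k) hr) as (y & hyc & hy).
  destruct (N2_lsc y (INR k) hy) as (r0 & hr0 & near_y).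
  set (d := N1 (vadd y (vopp c))) in *.
  assert (hSk : 0 < / INR (S k)) by (apply Rinv_0_lt_compat, lt_0_INR; lia).
  set (r' := Rmin (r0 / 2) (Rmin (/ INR (S k)) ((r - d) / 2))).
  assert (r'_pos : 0 < r') by (apply Rmin_glb_lt; [lra|apply Rmin_glb_lt; lra]).
  assert (r'_bounds : r' <= r0 / 2 /\ r' <= / INR (S k) /\ r' <= (r - d) / 2).
  { unfold r'. pose proof (Rmin_l (/ INR (S k)) ((r - d) / 2)).
    pose proof (Rmin_r (/ INR (S k)) ((r - d) / 2)).
    pose proof (Rmin_l (r0 / 2) (Rmin (/ INR (S k)) ((r - d) / 2))).
    pose proof (Rmin_r (r0 / 2) (Rmin (/ INR (S k)) ((r - d) / 2))).
    lra. }
  exists (y, r'). unfold nested_ball_step; cbn [fst snd].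
  split; [exact r'_pos|]. split; [apply r'_bounds|]. split; [fold d; lra|].
  intros z hz. apply near_y. lra.
Qed.

(* The Baire argument: otherwise there are nested closed balls, with radii
   tending to 0, on the k-th of which [N2 > k]; their common point has
   infinite [N2]. *)
Lemma lsc_seminorm_dominated : exists C, 0 < C /\ forall x, N2 x <= C * N1 x.
Proof.
  apply NNPP. intros not_dominated.
  assert (unb : forall M, exists x, M * N1 x < N2 x).
  { intros M. apply NNPP. intros hM. apply not_dominated.
    exists (Rabs M + 1). split; [pose proof (Rabs_pos M); lra|].
    intros x. apply Rnot_lt_le. intros hx. apply hM. exists x.
    pose proof (Rle_abs M). pose proof (seminorm_ge0 V N1 N1_semi x). nra. }
  assert (next : forall k p, {q | 0 < snd p -> nested_ball_step k p q}).
  { intros k p. apply constructive_indefinite_description.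
    destruct (Rlt_or_le 0 (snd p)) as [hp|hp].
    - destruct (nested_ball_step_exists unb k p hp) as [q hq]. exists q. intros _. exact hq.
    - exists p. intros hp'. lra. }
  set (balls := nat_rect (fun _ => (V * R)%type) (vzero, 1) (fun k p => proj1_sig (next k p))).
  assert (step : forall m, 0 < snd (balls m) /\ nested_ball_step m (balls m) (balls (S m))).
  { intros m. induction m as [|m [_ IH]].
    - split; [simpl; lra|]. apply (proj2_sig (next 0%nat (vzero, 1))). simpl. lra.
    - split; [apply IH|]. apply (proj2_sig (next (S m) (balls (S m)))), IH. }
  destruct (nested_balls_meet (fun m => fst (balls m)) (fun m => snd (balls m)))
    as [l hl].
  - intros m. apply Rlt_le, step.
  - intros m. apply step.
  - intros eps heps. destruct (archimed_cor1 eps heps) as ([|k] & hk & hk0); [lia|].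
    exists (S k). pose proof (proj1 (proj2 (proj2 (step k)))). lra.
  - destruct (INR_archimed 1 (N2 l)) as [m hm]; [lra|].
    pose proof (proj2 (proj2 (proj2 (proj2 (step m)))) l (hl (S m))). lra.
Qed.

End LscSeminormBounded.

Lemma open_for_dominated (V : CVS) (N1 N2 : V -> R) (C : R) (U : V -> Prop) :
  0 < C -> (forall x, N2 x <= C * N1 x) -> open_for N2 U -> open_for N1 U.
Proof.
  intros hC dom hU x hx. destruct (hU x hx) as (eps & heps & ball).
  exists (eps / C). split; [apply Rdiv_lt_0_compat; assumption|].
  intros y hy. apply ball. pose proof (dom (vadd y (vopp x))).
  apply (Rmult_lt_compat_l C) in hy; [|assumption].
  replace (C * (eps / C)) with eps in hy by (field; lra). lra.
Qed.

Lemma continuous_for_equivalent (V : CVS) (N1 N2 : V -> R) (C D : R) (T : V -> V) :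
  0 < C -> 0 < D -> (forall x, N2 x <= C * N1 x) -> (forall x, N1 x <= D * N2 x) ->
  continuous_for N1 T -> continuous_for N2 T.
Proof.
  intros hC hD dom21 dom12 hT x eps heps.
  destruct (hT x (eps / C)) as (delta & hdelta & close); [apply Rdiv_lt_0_compat; assumption|].
  exists (delta / D). split; [apply Rdiv_lt_0_compat; assumption|].
  intros y hy.
  assert (hy1 : N1 (vadd y (vopp x)) < delta).
  { pose proof (dom12 (vadd y (vopp x))). apply (Rmult_lt_compat_l D) in hy; [|assumption].
    replace (D * (delta / D)) with delta in hy by (field; lra). lra. }
  pose proof (close y hy1) as hTy. pose proof (dom21 (vadd (T y) (vopp (T x)))).
  apply (Rmult_lt_compat_l C) in hTy; [|assumption].
  replace (C * (eps / C)) with eps in hTy by (field; lra). lra.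
Qed.

Section FundamentalSymmetry.
Variables (H : GradedCVS) (n : bool) (form : H -> H -> Cx).
Hypothesis form_sesqui : is_sesquilinear H form.

Lemma linear_vopp (T : H -> H) x : is_linear H T -> T (vopp x) = vopp (T x).
Proof.
  intros [T_add _]. apply vopp_unique. rewrite <- T_add, vaddN.
  apply (vaddI _ (T vzero)). rewrite <- T_add, !vadd0. reflexivity.
Qed.

Lemma fundamental_symmetry_surjective J :
  is_fundamental_symmetry H n form J -> forall w, exists v, J v = w.
Proof.
  intros (J_lin & _ & J_sq & _).
  assert (homog_case : forall a w, homog a w -> exists v, J v = w).
  { intros a w hw. specialize (J_sq a w hw). destruct (negb n && a)%bool.
    - exists (J (vopp w)). rewrite !linear_vopp, J_sq by exact J_lin. apply voppK.
    - exists (J w). exact J_sq. }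
  intros w. destruct (homog_decomp H w) as (w0 & w1 & h0 & h1 & ->).
  destruct (homog_case _ _ h0) as [v0 <-]. destruct (homog_case _ _ h1) as [v1 <-].
  exists (vadd v0 v1). apply J_lin.
Qed.

Section OneSymmetry.
Variable J : H -> H.
Hypothesis J_fund : is_fundamental_symmetry H n form J.

Let gJ (x y : H) : R := Re (form x (J y)).

Lemma gJ_addl x y z : gJ (vadd x y) z = gJ x z + gJ y z.
Proof. unfold gJ. destruct form_sesqui as (hadd & _). rewrite hadd. reflexivity. Qed.

Lemma gJ_scalel t x z : gJ (rscale t x) z = t * gJ x z.
Proof.
  unfold gJ, rscale. destruct form_sesqui as (_ & hscal & _). rewrite hscal. simpl. ring.
Qed.

Lemma gJ_sym x y : gJ x y = gJ y x.
Proof.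
  unfold gJ. destruct J_fund as (_ & _ & _ & _ & J_herm & _). rewrite <- J_herm. reflexivity.
Qed.

Lemma gJ_ge0 x : 0 <= gJ x x.
Proof.
  destruct (classic (x = vzero)) as [->|hx].
  - pose proof (gJ_addl vzero vzero vzero) as h. rewrite vadd0 in h. lra.
  - destruct J_fund as (_ & _ & _ & _ & _ & J_pos & _). left. apply J_pos, hx.
Qed.

Lemma normJ_is_seminorm : is_seminorm (normJ H form J).
Proof. exact (inner_seminorm_is_seminorm H gJ gJ_addl gJ_scalel gJ_sym gJ_ge0). Qed.

Lemma normJ_Cauchy_Schwarz x y : Re (form x (J y)) <= normJ H form J x * normJ H form J y.
Proof. exact (inner_Cauchy_Schwarz H gJ gJ_addl gJ_scalel gJ_sym gJ_ge0 x y). Qed.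

Lemma normJ_complete : complete_for (normJ H form J).
Proof. apply J_fund. Qed.

End OneSymmetry.

Lemma normJ_lower_semicontinuous J1 J2 :
  is_fundamental_symmetry H n form J1 -> is_fundamental_symmetry H n form J2 ->
  lower_semicontinuous (normJ H form J1) (normJ H form J2).
Proof.
  intros hJ1 hJ2.
  apply (inner_seminorm_lsc H (fun x y => Re (form x (J2 y))));
    [apply gJ_addl | apply gJ_scalel | apply gJ_sym | apply gJ_ge0 | apply normJ_is_seminorm |];
    try assumption.
  intros x. destruct (fundamental_symmetry_surjective J1 hJ1 (J2 x)) as [w hw].
  exists (normJ H form J1 w). intros y. rewrite <- hw, Rmult_comm.
  apply normJ_Cauchy_Schwarz; assumption.
Qed.

Lemma normJ_dominated J1 J2 :
  is_fundamental_symmetry H n form J1 -> is_fundamental_symmetry H n form J2 ->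
  exists C, 0 < C /\ forall x, normJ H form J2 x <= C * normJ H form J1 x.
Proof.
  intros hJ1 hJ2. apply lsc_seminorm_dominated.
  - apply normJ_is_seminorm, hJ1.
  - apply normJ_is_seminorm, hJ2.
  - apply normJ_complete, hJ1.
  - apply normJ_lower_semicontinuous; assumption.
Qed.

End FundamentalSymmetry.

Theorem mainTheorem1 (H : GradedCVS) (n : bool) (form : H -> H -> Cx)
    (J1 J2 : H -> H) :
  is_Hilbert_superspace H n form ->
  is_fundamental_symmetry H n form J1 ->
  is_fundamental_symmetry H n form J2 ->
  (forall U : H -> Prop, is_openJ H form J1 U <-> is_openJ H form J2 U) /\
  (forall T : H -> H, is_linear H T ->
     (continuousJ H form J1 T <-> continuousJ H form J2 T)).
Proof.
  intros (form_sesqui & _) hJ1 hJ2.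
  destruct (normJ_dominated H n form form_sesqui J1 J2 hJ1 hJ2) as (C12 & hC12 & dom12).
  destruct (normJ_dominated H n form form_sesqui J2 J1 hJ2 hJ1) as (C21 & hC21 & dom21).
  split; intros; split.
  - apply (open_for_dominated _ _ _ C21 U hC21 dom21).
  - apply (open_for_dominated _ _ _ C12 U hC12 dom12).
  - apply (continuous_for_equivalent _ _ _ C12 C21 T hC12 hC21 dom12 dom21).
  - apply (continuous_for_equivalent _ _ _ C21 C12 T hC21 hC12 dom21 dom12).
Qed.
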